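(* In the model described in the context, if the threshold satisfies $t<\tau+f$ (i.e. $t$ records from distinct objects suffice to create an evidence), then the a-audit cannot satisfy strong accuracy.
   Context: Model. An asynchronous system has client processes (writers, readers, auditors) and $n$ storage objects $o_1,\dots,o_n$. Each $o_k$ is a linearisable loggable read/write register with a log $L_k$. Its rw-write($b$) stores a block; rw-read() returns the current block and appends $\langle p_r,\mathit{label}(b)\rangle$ to $L_k$, where $p_r$ is the reader and $\mathit{label}(b)$ identifies the value from which $b$ was derived; rw-getLog() returns $L_k$. A multi-writer multi-reader register over values $\mathbb{V}$ is emulated by information dispersal. An a-write($v$) encodes $v$ into $b_{v_1},\dots,b_{v_n}$ with $b_{v_k}$ sent to $o_k$. Any $\tau$ distinct blocks of $v$ suffice to recover $v$, and fewer do not; $\tau>f$. Reads are fast (one round-trip). Concurrency is unlimited, and writes may remain incomplete (reaching only some objects). Faults. At most $f$ objects are faulty; a faulty object may crash, omit its block, omit log records from auditors, and report records of nonexistent reads. Providing set $P_{p_r,v}$: the set of objects that received a write of $b_{v_k}$ and responded $b_{v_k}$ to a read of $p_r$. The value $v$ is effectively read by $p_r$ iff $|P_{p_r,v}|\ge\tau$. Audit. An a-audit collects logs from an auditing quorum of $n-f$ objects and returns a set $E_A$ of evidences. An evidence $\mathcal{E}_{p_r,v}$ is created once at least $t$ records $\langle p_r,\mathit{label}(v)\rangle$ from distinct objects are collected. Strong accuracy: for every correct reader $p_r$ and every value $v$, $|P_{p_r,v}|<\tau$ before the audit implies $\mathcal{E}_{p_r,v}\notin E_A$. *)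

(* Abstract model of the audit scenario at the moment of an
   a-audit: storage objects are indexed by 'I_n; reader identifiers and value
   labels are natural numbers (label(v) is identified with v). *)
From mathcomp Require Import all_boot.
Set Implicit Arguments. Unset Strict Implicit. Unset Printing Implicit Defensive.

Record Exec (n : nat) := MkExec {
  faulty    : {set 'I_n};
  written   : 'I_n -> nat -> bool;       (* o_k received rw-write(b_{v_k}) *)
  responded : nat -> 'I_n -> nat -> bool;(* o_k answered b_{v_k} to a read of p *)
  rlog      : 'I_n -> seq (nat * nat);   (* actual log L_k of o_k *)
  quorum    : {set 'I_n};
  reported  : 'I_n -> seq (nat * nat)    (* log of o_k as returned to the auditor *)
}.

(* Faulty
   objects are unconstrained (omit blocks/records, report fake records). *)
Definition admissible (n f : nat) (e : Exec n) : Prop :=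
  [/\ #|faulty e| <= f,
      #|quorum e| = n - f,
      (forall k p v, k \notin faulty e -> responded e p k v -> written e k v),
      (forall k p v, k \notin faulty e -> ((p, v) \in rlog e k) = responded e p k v)
    & (forall k, k \notin faulty e -> reported e k = rlog e k)].

Definition providing_set n (e : Exec n) (p v : nat) : {set 'I_n} :=
  [set k | written e k v && responded e p k v].

Definition evidence n (t : nat) (e : Exec n) (p v : nat) : bool :=
  t <= #|[set k in quorum e | (p, v) \in reported e k]|.

Definition strong_accuracy (n f tau t : nat) : Prop :=
  forall e : Exec n, admissible f e ->
  forall p v, #|providing_set e p v| < tau -> ~~ evidence t e p v.

(* Forged log records are indistinguishable from genuine ones. Write a value
   v to every object, make the first min(t, f) objects faulty, and let reader
   p be served only by the correct objects among the first t, while the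
   faulty ones among these forge the record <p, v>. Then t objects of the
   auditing quorum report <p, v>, so the evidence is created, although the
   providing set has only t - min(t, f) < tau members. *)
From mathcomp Require Import all_boot zify.
Set Implicit Arguments. Unset Strict Implicit. Unset Printing Implicit Defensive.

Lemma card_ord_ltn n b : #|[set i : 'I_n | i < b]| = minn b n.
Proof.
rewrite cardsE cardE /enum_mem size_filter -enumT.
rewrite -(count_map val (fun i => i < b)) val_enum_ord; have [b_le_n | n_lt_b] := leqP b n.
  by rewrite -size_filter (filter_iota_ltn 0) // size_iota.
rewrite -[RHS](size_iota 0) -count_predT.
by apply: eq_in_count => i; rewrite mem_iota add0n => /andP[_ /ltn_trans->].
Qed.

Lemma ord_ltn_subset n a b : a <= b ->
  [set i : 'I_n | i < a] \subset [set i : 'I_n | i < b].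
Proof. by move=> le_ab; apply/subsetP => i; rewrite !inE => /leq_trans->. Qed.

Section ForgedEvidence.

Variables n f t p v : nat.

Let reporting : {set 'I_n} := [set k : 'I_n | k < t].
Let forging : {set 'I_n} := [set k : 'I_n | k < minn t f].
Let serving : {set 'I_n} := reporting :\: forging.

Definition forged_evidence_exec : Exec n :=
  MkExec forging (fun _ _ => true)
    (fun q k w => [&& q == p, w == v & k \in serving])
    (fun k => if k \in serving then [:: (p, v)] else [::])
    [set k : 'I_n | k < n - f]
    (fun k => if k \in reporting then [:: (p, v)] else [::]).

Lemma forged_evidence_exec_admissible : admissible f forged_evidence_exec.
Proof.
split=> //=.
- by rewrite card_ord_ltn (leq_trans (geq_minl _ _) (geq_minr _ _)).
- by rewrite card_ord_ltn (minn_idPl (leq_subr f n)).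
- move=> k q w _; case: ifP => _; rewrite ?andbT ?andbF //.
  by rewrite mem_seq1 xpair_eqE.
- by move=> k /negbTE k_honest; rewrite /serving in_setD k_honest.
Qed.

Lemma card_providing_forged_evidence_exec : t <= n ->
  #|providing_set forged_evidence_exec p v| = t - minn t f.
Proof.
move=> t_le_n; have -> : providing_set forged_evidence_exec p v = serving.
  by apply/setP => k; rewrite inE /= !eqxx.
rewrite cardsD (setIidPr (ord_ltn_subset n (geq_minl t f))) !card_ord_ltn.
by rewrite (minn_idPl t_le_n) (minn_idPl (leq_trans (geq_minl t f) t_le_n)).
Qed.

Lemma forged_evidence_exec_evidence :
  t <= n - f -> evidence t forged_evidence_exec p v.
Proof.
move=> t_le_quorum; rewrite /evidence.
have -> : [set k in quorum forged_evidence_exec |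
            (p, v) \in reported forged_evidence_exec k] = reporting.
  apply/setP => k; rewrite /= !inE.
  case: (ltnP k t) => [k_lt_t | _]; last by rewrite andbF.
  by rewrite mem_seq1 eqxx andbT (leq_trans k_lt_t).
by rewrite card_ord_ltn (minn_idPl (leq_trans t_le_quorum (leq_subr f n))).
Qed.

End ForgedEvidence.

Theorem lemma4 (n f tau t : nat) :
  f < tau -> t <= n - f -> t < tau + f -> ~ strong_accuracy n f tau t.
Proof.
move=> f_lt_tau t_le_quorum t_lt_tau_f accurate.
have t_le_n : t <= n := leq_trans t_le_quorum (leq_subr f n).
have few_providers : #|providing_set (forged_evidence_exec n f t 0 0) 0 0| < tau.
  by rewrite card_providing_forged_evidence_exec //; lia.
have admissible_exec := forged_evidence_exec_admissible n f t 0 0.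
move/negP: (accurate _ admissible_exec 0 0 few_providers); apply.
exact: forged_evidence_exec_evidence.
Qed.
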